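(* Let $\{V_0(n)\}_{n\in\mathbb{Z}}$, $\{V_1(n)\}_{n\in\mathbb{Z}}$ be real-valued sequences and $\{f_1(n)\}_{n\in\mathbb{Z}}$ a sequence. Consider the operators on complex-valued sequences $\ell(\mathbb{Z};\mathbb{C})$ $$H_0=-\bigtriangleup^2+V_0(n),\qquad H_1=-\bigtriangleup^2+V_1(n),$$ $$\big(A_1^{(n)}\big)^+=-\bigtriangleup+f_1(n),\qquad \big(A_1^{(n+2)}\big)^+=-\bigtriangleup+f_1(n+2),$$ where $V_0(n)$, $V_1(n)$, $f_1(n)$, $f_1(n+2)$ act as multiplication operators (i.e. $(f_1(n+2)\psi)(n)=f_1(n+2)\psi(n)$). If the operator identity $$H_1\big(A_1^{(n)}\big)^+=\big(A_1^{(n+2)}\big)^+H_0$$ holds on $\ell(\mathbb{Z};\mathbb{C})$, then for all $n$ $$V_1(n)=V_0(n+1)-2\bigtriangleup f_1(n+1),$$ $$-\bigtriangleup^2 f_1(n)+\bigtriangleup V_0(n)-2f_1(n)\bigtriangleup f_1(n+1)=-f_1(n)V_0(n+1)+f_1(n+2)V_0(n).$$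
   Context: For a sequence $\psi:\mathbb{Z}\to\mathbb{C}$, the forward difference is $\bigtriangleup\psi(n)=\psi(n+1)-\psi(n)$ and $\bigtriangleup^2\psi(n)=\psi(n+2)-2\psi(n+1)+\psi(n)$. *)

From mathcomp Require Import all_boot all_order all_algebra.
From mathcomp Require Import reals.
From mathcomp Require Export complex.
Set Implicit Arguments. Unset Strict Implicit. Unset Printing Implicit Defensive.
Import Order.TTheory GRing.Theory Num.Theory.
Local Open Scope ring_scope.

Section Defs.
Variable R : realType.

Definition fdiff (psi : int -> R[i]) : int -> R[i] :=
  fun n => psi (n + 1) - psi n.

Definition cseq (V : int -> R) : int -> R[i] := fun n => (V n)%:C%C.

Definition Hop (V : int -> R) (psi : int -> R[i]) : int -> R[i] :=
  fun n => - fdiff (fdiff psi) n + (V n)%:C%C * psi n.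

Definition Aplus (g : int -> R[i]) (psi : int -> R[i]) : int -> R[i] :=
  fun n => - fdiff psi n + g n * psi n.
End Defs.

(* Evaluated at n, both sides of the intertwining relation are combinations of
   psi n, ..., psi (n + 3) whose coefficients depend only on n.  Testing the
   identity on Kronecker deltas compares these coefficients: the coefficient
   of psi (n + 1) yields V1, and the coefficient of psi n, once V1 n is
   eliminated, yields the second identity. *)

From mathcomp Require Import all_boot all_order all_algebra.
From mathcomp Require Import reals complex.
From mathcomp Require Import ring.

Import Order.TTheory GRing.Theory Num.Theory.
Local Open Scope ring_scope.

Lemma shift_comb_coef_eq (K : pzRingType) (N : nat) (n : int) (c d : nat -> K) :
  (forall psi : int -> K,
      \sum_(j < N) c j * psi (n + j%:R) = \sum_(j < N) d j * psi (n + j%:R)) ->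
  forall k, (k < N)%N -> c k = d k.
Proof.
move=> eq_cd k lt_kN.
have sum_delta (e : nat -> K) :
    \sum_(j < N) e j * ((n + j%:R == n + k%:R :> int))%:R = e k.
  under eq_bigr => j _ do rewrite (inj_eq (addrI n)) eqr_nat mulr_natr mulrb.
  by rewrite -big_mkcond big_ord1_eq lt_kN.
by rewrite -(sum_delta c) -(sum_delta d) (eq_cd (fun m => (m == n + k%:R)%:R)).
Qed.

Section ComposedOperators.
Context {R : realType}.
Implicit Types (V : int -> R) (g h psi : int -> R[i]) (n : int).

Definition Hop_Aplus_coef V g n : seq R[i] :=
  [:: ((V n)%:C%C - 1) * (1 + g n); 3 + 2 * g (n + 1) - (V n)%:C%C;
      - (3 + g (n + 2)); 1].

Definition Aplus_Hop_coef V h n : seq R[i] :=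
  [:: (1 + h n) * ((V n)%:C%C - 1); 3 + 2 * h n - (V (n + 1))%:C%C;
      - (3 + h n); 1].

Lemma Hop_AplusE V g psi n :
  Hop V (Aplus g psi) n = \sum_(j < 4) (Hop_Aplus_coef V g n)`_j * psi (n + j%:R).
Proof.
rewrite /Hop /Aplus /fdiff !big_ord_recr big_ord0 /= addr0.
have -> : n + 1 + 1 + 1 = n + 3 by rewrite -!addrA.
have -> : n + 1 + 1 = n + 2 by rewrite -addrA.
ring.
Qed.

Lemma Aplus_HopE V h psi n :
  Aplus h (Hop V psi) n = \sum_(j < 4) (Aplus_Hop_coef V h n)`_j * psi (n + j%:R).
Proof.
rewrite /Hop /Aplus /fdiff !big_ord_recr big_ord0 /= addr0.
have -> : n + 1 + 1 + 1 = n + 3 by rewrite -!addrA.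
have -> : n + 1 + 1 = n + 2 by rewrite -addrA.
ring.
Qed.

Lemma intertwining_coef_eq V0 V1 g h :
  (forall psi, Hop V1 (Aplus g psi) = Aplus h (Hop V0 psi)) ->
  forall n, Hop_Aplus_coef V1 g n = Aplus_Hop_coef V0 h n.
Proof.
move=> intertwine n; apply: (eq_from_nth (x0 := 0)) => // k lt_k4.
apply: (@shift_comb_coef_eq _ 4 n _ _ _ k lt_k4) => psi.
by rewrite -Hop_AplusE -Aplus_HopE intertwine.
Qed.

End ComposedOperators.

Theorem theorem1 (R : realType) (V0 V1 : int -> R) (f1 : int -> R[i]) :
  (forall psi : int -> R[i],
      Hop V1 (Aplus f1 psi) = Aplus (fun n => f1 (n + 2)) (Hop V0 psi)) ->
  forall n : int,
    (V1 n)%:C%C = (V0 (n + 1))%:C%C - 2%:R * fdiff f1 (n + 1) /\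
    - fdiff (fdiff f1) n + fdiff (cseq V0) n - 2%:R * f1 n * fdiff f1 (n + 1)
      = - f1 n * (V0 (n + 1))%:C%C + f1 (n + 2) * (V0 n)%:C%C.
Proof.
move=> intertwine n.
have := intertwining_coef_eq V0 V1 f1 _ intertwine n.
rewrite /Hop_Aplus_coef /Aplus_Hop_coef => -[/eqP + /eqP +].
rewrite -subr_eq0 => /eqP coef0; rewrite -subr_eq0 => /eqP coef1.
have V1E : (V1 n)%:C%C = (V0 (n + 1))%:C%C - 2%:R * fdiff f1 (n + 1).
  by apply/subr0_eq; rewrite -[0]oppr0 -coef1 /fdiff -addrA; ring.
split=> //; rewrite V1E in coef0.
by apply/subr0_eq; rewrite -coef0 /fdiff /cseq -!addrA; ring.
Qed.
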